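(* Let $n\ge 3$, let $A=[a_{ij}]$ be a real $n\times n$ matrix with zero diagonal, and let $f(\sigma)=\sum_{k=1}^{n-1}\sum_{l=k+1}^n a_{\sigma(k)\sigma(l)}$ be the LOP objective function on $\Sigma_n$, and assume $\hat f_{(n-2,1,1)}=0$. Let $1\le i<j\le n$ and $\sigma\in\Sigma_n$, and let $\sigma_{ij}\circ\sigma$ denote the permutation obtained from $\sigma$ by exchanging the entries in positions $i$ and $j$ of its one-line notation (i.e. $[\sigma(1)\cdots\sigma(i-1)\ \sigma(j)\ \sigma(i+1)\cdots\sigma(j-1)\ \sigma(i)\ \sigma(j+1)\cdots\sigma(n)]$). Then $$f(\sigma)-f(\sigma_{ij}\circ\sigma)=(j-i)\bigl(a_{\sigma(i)\sigma(j)}-a_{\sigma(j)\sigma(i)}\bigr).$$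
   Context: $\Sigma_n$ is the symmetric group on $\{1,\dots,n\}$, permutations written in one-line notation $[\sigma(1)\cdots\sigma(n)]$ with $\sigma(k)$ the row/column index placed in position $k$. For a partition $\lambda$ of $n$, $\rho_\lambda$ is the irreducible representation of $\Sigma_n$ indexed by $\lambda$ and $\hat f_\lambda=\sum_{\sigma\in\Sigma_n}f(\sigma)\rho_\lambda(\sigma)$. (The hypothesis $\hat f_{(n-2,1,1)}=0$ is equivalent to $a_{pq}-a_{qp}+a_{qr}-a_{rq}=a_{pr}-a_{rp}$ for all $p,q,r$.) *)

From mathcomp Require Import all_boot all_order all_algebra all_fingroup.
Set Implicit Arguments. Unset Strict Implicit. Unset Printing Implicit Defensive.
Import GRing.Theory Num.Theory.
Local Open Scope ring_scope.

(* Positions and values are indexed by 'I_n = {0,...,n-1} (0-based).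
   A permutation s : 'S_n is read in one-line notation [s 0 ... s (n-1)]. *)

Definition LOP_obj (R : ringType) (n : nat) (A : 'M[R]_n) (s : 'S_n) : R :=
  \sum_(k < n) \sum_(l < n | (k < l)%N) A (s k) (s l).

(* The irreducible representation rho_{(n-2,1,1)} of S_n is (up to
   equivalence) the exterior square of the standard representation
   V = {x in R^n | sum x = 0}.  We realize Lambda^2 R^n as the space of
   skew-symmetric n x n matrices (e_a /\ e_b <-> E_ab - E_ba), with s acting
   by W |-> P_s W P_s^T; Lambda^2 V is the subspace of skew matrices with
   zero row sums.  \hat f_rho = sum_s f(s) rho(s) is then the operator
   W |-> sum_s f(s) P_s W P_s^T on that subspace (it preserves it), and
   \hat f_{(n-2,1,1)} = 0 means this operator vanishes on Lambda^2 V. *)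
Definition ext2_std_space (R : ringType) (n : nat) (W : 'M[R]_n) : Prop :=
  W^T = - W /\ (forall a : 'I_n, \sum_(b < n) W a b = 0).

Definition fourier_ext2std (R : comRingType) (n : nat) (f : 'S_n -> R)
  (W : 'M[R]_n) : 'M[R]_n :=
  \sum_(s : 'S_n) f s *: (perm_mx s *m W *m (perm_mx s)^T).

Definition fourier_hook_vanishes (R : comRingType) (n : nat) (f : 'S_n -> R)
  : Prop :=
  forall W : 'M[R]_n, ext2_std_space W -> fourier_ext2std f W = 0.

(* Write H := A - A^T.  Swapping the entries in positions i < j of sigma
   reverses the relative order of exactly the pairs of positions (i, k) and
   (k, j) with i < k < j, and (i, j); hence
     f(sigma) - f(sigma_ij sigma)
       = sum_(i < k <= j) (H_(sigma i, sigma k) + H_(sigma k, sigma j)).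
   The Fourier hypothesis makes H a cocycle, H_pq + H_qr = H_pr: for W in the
   exterior square of the standard representation, the (0,1) entry of
   sum_sigma f(sigma) sigma.W, antisymmetrized by the adjacent transposition
   (0 1) and averaged over the 2-transitive group S_n, is a multiple of
   sum_(p,q) H_pq W_pq, and W = e_p/\e_q + e_q/\e_r + e_r/\e_p is such a
   vector.  Each of the j - i summands above is therefore
   H_(sigma i, sigma j). *)

From mathcomp Require Import all_boot all_order all_algebra all_fingroup.
From mathcomp Require Import ring zify.
Set Implicit Arguments.
Unset Strict Implicit.
Unset Printing Implicit Defensive.

Import GRing.Theory Num.Theory.
Local Open Scope ring_scope.

Lemma sum_indicator (R : nzSemiRingType) (I : finType) (P : pred I) (F : I -> R) :
  \sum_k (P k)%:R * F k = \sum_(k | P k) F k.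
Proof.
rewrite [RHS]big_mkcond; apply: eq_bigr => k _.
by case: (P k); rewrite ?mul1r ?mul0r.
Qed.

Lemma sum2_eq_indicator (R : nzSemiRingType) (I : finType) (c : I) (P : pred I)
    (F : I -> I -> R) :
  \sum_k \sum_l ((k == c) && P l)%:R * F k l = \sum_(l | P l) F c l.
Proof.
rewrite (bigD1 c) //= eqxx sum_indicator [X in _ + X]big1 ?addr0 // => k /negbTE ->.
by rewrite big1 // => l _; rewrite mul0r.
Qed.

Lemma sum_andb_eq (R : nzSemiRingType) (I : finType) (c : bool) (q : I) :
  \sum_y (c && (y == q))%:R = c%:R :> R.
Proof.
rewrite (bigD1 q) //= eqxx andbT big1 ?addr0 // => y /negbTE neq_yq.
by rewrite neq_yq andbF.
Qed.

Lemma card_ord_range n (i j : nat) : (j < n)%N ->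
  #|[pred k : 'I_n | (i < k <= j)%N]| = (j - i)%N.
Proof.
move=> ltjn; rewrite -sum1_card big_mkcond /=.
suff -> : forall m, (\sum_(k < m) (if (i < k <= j)%N then 1 else 0)
                     = minn m j.+1 - minn m i.+1)%N.
  by lia.
elim=> [|m IH]; first by rewrite big_ord0; lia.
by rewrite big_ord_recr /= IH; case: ifP; lia.
Qed.

Section SwapFormula.

Variables (R : comNzRingType) (n : nat) (A : 'M[R]_n).

Lemma LOP_obj_mulE (t s : 'S_n) :
  LOP_obj A (t * s)%g
  = \sum_k \sum_l (t^-1%g k < t^-1%g l)%N%:R * A (s k) (s l).
Proof.
rewrite /LOP_obj (reindex_inj (@perm_inj _ t^-1)); apply: eq_bigr => k _.
rewrite big_mkcond (reindex_inj (@perm_inj _ t^-1)); apply: eq_bigr => l _.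
by rewrite !permM !permKV; case: ifP; rewrite ?mul1r ?mul0r.
Qed.

Variables (i j : 'I_n).
Hypothesis lt_ij : (i < j)%N.

(* The pair (j, j) is included harmlessly, so that both sums of
   [sum_tperm_inversion] run over the same range. *)
Definition tperm_inversion (k l : 'I_n) : bool :=
  ((k == i) && (i < l <= j)%N) || ((l == j) && (i < k <= j)%N).

Lemma ltn_tperm_inversion (k l : 'I_n) :
  ((k < l) + tperm_inversion l k = (tperm i j k < tperm i j l) + tperm_inversion k l)%N.
Proof.
rewrite /tperm_inversion !permE /= -!(inj_eq (@ord_inj n)).
by repeat case: ifP => ?; lia.
Qed.

Lemma natr_ltn_tperm (k l : 'I_n) :
  (k < l)%N%:R - (tperm i j k < tperm i j l)%N%:R
  = (tperm_inversion k l)%:R - (tperm_inversion l k)%:R :> R.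
Proof.
apply/eqP; rewrite subr_eq addrAC eq_sym subr_eq -!natrD.
by rewrite addnC ltn_tperm_inversion addnC.
Qed.

Lemma sum_tperm_inversion (F : 'I_n -> 'I_n -> R) :
  \sum_k \sum_l (tperm_inversion k l)%:R * F k l
  = \sum_(k < n | (i < k <= j)%N) (F i k + F k j).
Proof.
have split_or k l : (tperm_inversion k l)%:R
    = ((k == i) && (i < l <= j)%N)%:R + ((l == j) && (i < k <= j)%N)%:R :> R.
  by rewrite /tperm_inversion; case: (k =P i) => [->|_] /=;
    rewrite ?ltnn ?andbF ?orbF ?addr0 ?add0r.
under eq_bigr => k _ do under eq_bigr => l _ do rewrite split_or mulrDl.
under eq_bigr => k _ do rewrite big_split.
rewrite big_split /= sum2_eq_indicator exchange_big /= sum2_eq_indicator.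
by rewrite -big_split.
Qed.

Lemma LOP_obj_tpermE (s : 'S_n) :
  LOP_obj A s - LOP_obj A (tperm i j * s)%g
  = \sum_(k < n | (i < k <= j)%N) ((A - A^T) (s i) (s k) + (A - A^T) (s k) (s j)).
Proof.
rewrite -(sum_tperm_inversion (fun k l => (A - A^T) (s k) (s l))).
rewrite -{1}[s]mul1g !LOP_obj_mulE invg1 tpermV -sumrB.
under eq_bigr => k _ do rewrite -sumrB.
under eq_bigr => k _ do under eq_bigr => l _ do
  rewrite -mulrBl !perm1 natr_ltn_tperm mulrBl.
under eq_bigr => k _ do rewrite sumrB.
rewrite sumrB [X in _ - X]exchange_big -sumrB /=; apply: eq_bigr => k _.
rewrite -sumrB; apply: eq_bigr => l _.
by rewrite !mxE -mulrBr.
Qed.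

End SwapFormula.

Lemma fourier_ext2stdE (R : comNzRingType) n (f : 'S_n -> R) (W : 'M[R]_n) a b :
  fourier_ext2std f W a b = \sum_s f s * W (s a) (s b).
Proof.
rewrite /fourier_ext2std summxE; apply: eq_bigr => s _.
by rewrite mxE tr_perm_mx -col_permE -row_permE !mxE.
Qed.

Lemma sum_tperm_mul_skew (R : nzRingType) n (f : 'S_n -> R) (W : 'M[R]_n) x0 x1 :
  W^T = - W ->
  \sum_s f (tperm x0 x1 * s)%g * W (s x0) (s x1) = - \sum_s f s * W (s x0) (s x1).
Proof.
move=> skewW; have skew a b : W b a = - W a b.
  by have := congr1 (fun M : 'M[R]_n => M a b) skewW; rewrite !mxE.
rewrite (reindex_inj (mulgI (tperm x0 x1))) -sumrN; apply: eq_bigr => s _.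
by rewrite mulgA tperm2 mul1g !permM tpermL tpermR skew mulrN.
Qed.

Lemma exists_perm_pair (T : finType) (x0 x1 x y : T) : x0 != x1 -> x != y ->
  exists t : {perm T}, t x0 = x /\ t x1 = y.
Proof.
move=> neq01 neqxy; set c := tperm x0 x x1.
have neq_cx : c != x.
  by apply: contra neq01 => /eqP/(congr1 (tperm x0 x)); rewrite tpermK tpermR => ->.
exists (tperm x0 x * tperm c y)%g.
by rewrite !permM -/c !tpermL tpermD // eq_sym.
Qed.

Lemma sum_perm_pair (R : nmodType) (T : finType) (G : T -> T -> R) (x0 x1 x y : T) :
  x0 != x1 -> x != y ->
  \sum_(s : {perm T}) G (s x) (s y) = \sum_(s : {perm T}) G (s x0) (s x1).
Proof.
move=> neq01 neqxy; have [t [<- <-]] := exists_perm_pair neq01 neqxy.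
by rewrite [RHS](reindex_inj (mulgI t)); apply: eq_bigr => s _; rewrite !permM.
Qed.

Lemma sum_perm_double (R : nzSemiRingType) n (G : 'I_n -> 'I_n -> R) :
  \sum_(s : 'S_n) \sum_x \sum_y G (s x) (s y) = n`!%:R * \sum_x \sum_y G x y.
Proof.
rewrite mulr_natl -card_Sn -sumr_const; apply: eq_bigr => s _.
rewrite [RHS](reindex_inj (@perm_inj _ s)); apply: eq_bigr => x _.
by rewrite [RHS](reindex_inj (@perm_inj _ s)).
Qed.

Lemma sum_perm_pair_eq0 (R : numDomainType) n (G : 'I_n -> 'I_n -> R) (x0 x1 : 'I_n) :
  x0 != x1 -> (forall x, G x x = 0) -> \sum_(s : 'S_n) G (s x0) (s x1) = 0 ->
  \sum_x \sum_y G x y = 0.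
Proof.
move=> neq01 G_diag G_pair.
have /eqP : n`!%:R * \sum_x \sum_y G x y = 0.
  rewrite -sum_perm_double exchange_big big1 // => x _.
  rewrite exchange_big big1 // => y _.
  have [<-|neqxy] := eqVneq x y; first by rewrite big1.
  by rewrite (sum_perm_pair _ neq01 neqxy).
by rewrite mulf_eq0 pnatr_eq0 gtn_eqF ?fact_gt0 //= => /eqP.
Qed.

Section Pairing.

Variables (R : comNzRingType) (n : nat).

Definition mx_dot (H W : 'M[R]_n) : R := \sum_x \sum_y H x y * W x y.

Lemma mx_dotD H W1 W2 : mx_dot H (W1 + W2) = mx_dot H W1 + mx_dot H W2.
Proof.
rewrite /mx_dot -big_split; apply: eq_bigr => x _.
by rewrite -big_split; apply: eq_bigr => y _; rewrite mxE mulrDr.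
Qed.

Lemma mx_dotB H W1 W2 : mx_dot H (W1 - W2) = mx_dot H W1 - mx_dot H W2.
Proof.
rewrite /mx_dot -sumrB; apply: eq_bigr => x _.
by rewrite -sumrB; apply: eq_bigr => y _; rewrite !mxE mulrBr.
Qed.

Lemma mx_dot_delta H (p q : 'I_n) : mx_dot H (delta_mx p q) = H p q.
Proof.
rewrite /mx_dot (eq_bigr (fun x => \sum_y ((x == p) && (y == q))%:R * H x y)).
  by rewrite sum2_eq_indicator big_pred1_eq.
by move=> x _; apply: eq_bigr => y _; rewrite mxE mulrC.
Qed.

Definition wedge_mx (p q : 'I_n) : 'M[R]_n := delta_mx p q - delta_mx q p.

Lemma mx_dot_wedge H (p q : 'I_n) : mx_dot H (wedge_mx p q) = H p q - H q p.
Proof. by rewrite mx_dotB !mx_dot_delta. Qed.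

Lemma tr_wedge_mx (p q : 'I_n) : (wedge_mx p q)^T = - wedge_mx p q.
Proof. by rewrite linearB /= !trmx_delta opprB. Qed.

Lemma wedge_triangle_ext2_std (p q r : 'I_n) :
  ext2_std_space (wedge_mx p q + wedge_mx q r + wedge_mx r p).
Proof.
split; first by rewrite 2!linearD /= !tr_wedge_mx !opprD.
move=> a; under eq_bigr => b _ do rewrite !mxE.
by rewrite !(big_split, sumrN) /= !sum_andb_eq; ring.
Qed.

End Pairing.

Lemma skew_cocycle (R : numDomainType) n (H : 'M[R]_n) :
  H^T = - H -> (forall W, ext2_std_space W -> mx_dot H W = 0) ->
  forall p q r, H p q + H q r = H p r.
Proof.
move=> skewH dotH p q r.
have skew a b : H b a = - H a b.
  by have := congr1 (fun M : 'M[R]_n => M a b) skewH; rewrite !mxE.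
have := dotH _ (wedge_triangle_ext2_std R p q r).
rewrite 2!mx_dotD !mx_dot_wedge (skew p q) (skew q r) (skew p r) => dot0.
have /eqP : 2 * (H p q + H q r - H p r) = 0 by rewrite -dot0; ring.
by rewrite mulf_eq0 pnatr_eq0 /= subr_eq0 => /eqP.
Qed.

Lemma mx_dot_LOP_skew_eq0 (R : numDomainType) n (A : 'M[R]_n) :
  (1 < n)%N -> fourier_hook_vanishes (LOP_obj A) ->
  forall W, ext2_std_space W -> mx_dot (A - A^T) W = 0.
Proof.
move=> lt1n hfour W hW; have [skewW _] := hW.
pose x0 : 'I_n := Ordinal (ltnW lt1n); pose x1 : 'I_n := Ordinal lt1n.
have fW : \sum_s LOP_obj A s * W (s x0) (s x1) = 0.
  have := congr1 (fun M : 'M[R]_n => M x0 x1) (hfour W hW).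
  by rewrite fourier_ext2stdE mxE.
have skew_diag x : (A - A^T) x x = 0 by rewrite !mxE subrr.
apply: (@sum_perm_pair_eq0 _ _ _ x0 x1) => // [x|]; first by rewrite skew_diag mul0r.
transitivity (\sum_s (LOP_obj A s - LOP_obj A (tperm x0 x1 * s)%g) * W (s x0) (s x1)).
  apply: eq_bigr => s _; congr (_ * _).
  rewrite LOP_obj_tpermE // (big_pred1 x1) => [|k]; first by rewrite skew_diag addr0.
  by case: k => [[|[|k]] ?].
under eq_bigr => s _ do rewrite mulrBl.
by rewrite sumrB sum_tperm_mul_skew // fW oppr0 subrr.
Qed.

Theorem proposition2 (R : realFieldType) (n : nat) (A : 'M[R]_n)
  (hn : (3 <= n)%N)
  (hdiag : forall i : 'I_n, A i i = 0)
  (hfour : fourier_hook_vanishes (LOP_obj A))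
  (i j : 'I_n) (hij : (i < j)%N) (s : 'S_n) :
  LOP_obj A s - LOP_obj A (tperm i j * s)%g
  = (j - i)%:R * (A (s i) (s j) - A (s j) (s i)).
Proof.
have skewA : (A - A^T)^T = - (A - A^T) by rewrite linearB /= trmxK opprB.
have cocycle := skew_cocycle skewA (mx_dot_LOP_skew_eq0 (ltnW hn) hfour).
rewrite LOP_obj_tpermE //; under eq_bigr => k _ do rewrite cocycle.
by rewrite sumr_const card_ord_range // mulr_natl !mxE.
Qed.
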